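(* Let $G$ be a connected graph with $|V(G)| \ge 3$. If $\det(G) \neq 1$, then $\frac{1}{2}\det(G) \le \det'(G) \le \det(G)$.
   Context: A vertex subset $S$ of $G$ is a vertex determining set if the only automorphism of $G$ fixing every vertex of $S$ is the identity; the determining number $\det(G)$ is the minimum size of a vertex determining set. For a graph $G$ with at most one isolated vertex and no component isomorphic to $K_2$, an edge subset $T$ is an edge determining set if the only automorphism $\phi$ of $G$ satisfying $\{\phi(u),\phi(v)\}=\{u,v\}$ for all $\{u,v\}\in T$ is the identity; the determining index $\det'(G)$ is the minimum size of an edge determining set. *)

From mathcomp Require Import all_boot all_fingroup.
Set Implicit Arguments. Unset Strict Implicit. Unset Printing Implicit Defensive.

Definition simple_graph (T : finType) (e : rel T) : Prop :=
  symmetric e /\ irreflexive e.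

Definition connected_graph (T : finType) (e : rel T) : Prop :=
  forall x y : T, connect e x y.

Definition is_aut (T : finType) (e : rel T) (s : {perm T}) : bool :=
  [forall x : T, forall y : T, e (s x) (s y) == e x y].

Definition vdet_set (T : finType) (e : rel T) (S : {set T}) : bool :=
  [forall s : {perm T}, (is_aut e s && [forall x in S, s x == x]) ==> (s == 1%g)].

(* Determining number det(G): minimum size of a vertex determining set
   (V(G) itself is always determining, so the default #|T| is harmless). *)
Definition det_number (T : finType) (e : rel T) : nat :=
  \big[minn/#|T|]_(S : {set T} | vdet_set e S) #|S|.

Definition is_edge (T : finType) (e : rel T) (A : {set T}) : bool :=
  [exists u, exists v, e u v && (A == [set u; v])].

Definition edge_set (T : finType) (e : rel T) : {set {set T}} :=
  [set A | is_edge e A].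

Definition edet_set (T : finType) (e : rel T) (X : {set {set T}}) : bool :=
  (X \subset edge_set e) &&
  [forall s : {perm T}, (is_aut e s && [forall A in X, s @: A == A]) ==> (s == 1%g)].

(* Determining index det'(G): minimum size of an edge determining set
   (under the paper's hypotheses E(G) itself is edge determining). *)
Definition det_index (T : finType) (e : rel T) : nat :=
  \big[minn/#|edge_set e|]_(X : {set {set T}} | edet_set e X) #|X|.

From mathcomp Require Import all_boot all_fingroup.
Set Implicit Arguments. Unset Strict Implicit. Unset Printing Implicit Defensive.

(* Upper bound: take a minimum determining set S with two vertices r <> s.
   Pair every v in S \ {r} with a neighbour p v strictly closer to r; an
   automorphism that fixes r and stabilises the edge {v, p v} cannot move v
   onto p v, since it preserves distances to r.  The edge at r (towards s, and
   one extra edge leaving {r, s} when r ~ s, where the edges at r and at s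
   coincide) forces r itself to be fixed, so |S| edges are edge determining.
   Lower bound: the endpoints of an edge determining set form a vertex
   determining set. *)

Lemma geq_bigminn (I : finType) (P : pred I) (F : I -> nat) d i :
  P i -> \big[minn/d]_(j | P j) F j <= F i.
Proof.
move=> Pi; move: (mem_index_enum i); elim: (index_enum I) => [//|a s IH].
rewrite inE big_cons => /orP [/eqP <-|si]; first by rewrite Pi geq_minl.
by case: (P a); [apply: leq_trans (geq_minr _ _) (IH si) | apply: IH].
Qed.

Lemma bigminn_attained (I : finType) (P : pred I) (F : I -> nat) d i0 :
  P i0 -> F i0 <= d -> exists2 i, P i & \big[minn/d]_(j | P j) F j = F i.
Proof.
move=> Pi0 Fi0d.
have [dmin|] : \big[minn/d]_(j | P j) F j = d \/
    exists2 i, P i & \big[minn/d]_(j | P j) F j = F i; last by [].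
  apply: (big_ind (fun x => x = d \/ exists2 i, P i & x = F i)); first by left.
  - by move=> x y Hx Hy; case: leqP => _.
  - by move=> j Pj; right; exists j.
by exists i0 => //; apply/eqP; rewrite eqn_leq geq_bigminn //= dmin.
Qed.

Lemma exists_notin (T : finType) (A : {set T}) : #|A| < #|T| ->
  exists y, y \notin A.
Proof.
move=> ltAT; apply/existsP; rewrite -negb_forall; apply: contraTN ltAT.
move=> /forallP inA; rewrite -leqNgt -cardsT subset_leq_card //.
by apply/subsetP => x _; exact: inA.
Qed.

Lemma mem_fixed_imset (T : finType) (f : T -> T) (A : {set T}) x :
  f @: A = A -> x \in A -> f x \in A.
Proof. by move=> fA Ax; rewrite -fA imset_f. Qed.

Section Graph.
Variables (T : finType) (e : rel T).

Fixpoint within n x y : bool :=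
  if n is n'.+1 then within n' x y || [exists z, e x z && within n' z y]
  else x == y.

Lemma withinS n x y : within n x y -> within n.+1 x y.
Proof. by move=> /= ->. Qed.

Lemma within_cons n x z y : e x z -> within n z y -> within n.+1 x y.
Proof. by move=> xz zy /=; apply/orP; right; apply/existsP; exists z; rewrite xz. Qed.

Lemma within_rcons n x z y : within n x z -> e z y -> within n.+1 x y.
Proof.
elim: n x => [|n IH] x.
  by move=> /eqP -> zy; exact: (@within_cons 0 _ _ _ zy (eqxx y)).
move=> xz zy; case/orP: xz => [xz | /existsP [w /andP [xw wz]]].
  by apply: withinS; exact: IH.
exact: within_cons xw (IH _ wz zy).
Qed.

Lemma connect_within x y : connect e x y -> exists n, within n x y.
Proof.
move=> /connectP [p xp ->]; exists (size p).
elim: p x xp => [|z p IH] x /=; first by [].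
by case/andP => xz zp; exact: within_cons xz (IH _ zp).
Qed.

Definition closer_to (y z x : T) : Prop :=
  exists m, within m z y /\ ~~ within m x y.

Lemma exists_closer_neighbor x y : connect e x y -> x != y ->
  exists2 z, e x z & closer_to y z x.
Proof.
move=> /connect_within [n]; elim: n x => [|n IH] x /=.
  by move=> /eqP ->; rewrite eqxx.
case/orP => [xy | /existsP [z /andP [xz zy]]] neq_xy; first exact: IH.
have [xy|nxy] := boolP (within n x y); first exact: IH.
by exists z => //; exists n.
Qed.

Lemma is_autE (f : {perm T}) x y : is_aut e f -> e (f x) (f y) = e x y.
Proof. by move=> /forallP /(_ x) /forallP /(_ y) /eqP. Qed.

Lemma within_aut (f : {perm T}) n x y :
  is_aut e f -> within n (f x) (f y) = within n x y.
Proof.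
move=> autf; elim: n x => [|n IH] x /=; first by rewrite (inj_eq perm_inj).
rewrite IH; congr orb.
apply/existsP/existsP => [[z /andP [xz zy]] | [z /andP [xz zy]]].
  by exists (f^-1 z)%g; rewrite -(is_autE _ _ autf) -IH permKV xz zy.
by exists (f z); rewrite is_autE // IH xz zy.
Qed.

Lemma aut_not_closer (f : {perm T}) x y :
  is_aut e f -> f y = y -> ~ closer_to y (f x) x.
Proof.
by move=> autf fy [m [fxy nxy]]; move: nxy; rewrite -(within_aut m x y autf) fy fxy.
Qed.

Lemma connect_cut_edge (A : {set T}) x y : x \in A -> y \notin A ->
  connect e x y -> exists a b, [/\ a \in A, b \notin A & e a b].
Proof.
move=> Ax Ay /connectP [p xp yp].
elim: p x Ax xp yp => [|z p IH] x Ax /=; first by move=> _ yx; rewrite yx Ax in Ay.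
case/andP => xz zp yp; have [Az|Az] := boolP (z \in A); first exact: IH zp yp.
by exists x, z.
Qed.

Lemma edge_set_pair u v : e u v -> [set u; v] \in edge_set e.
Proof.
move=> uv; rewrite inE; apply/existsP; exists u; apply/existsP; exists v.
by rewrite uv eqxx.
Qed.

Lemma edge_set_card_le2 A : A \in edge_set e -> #|A| <= 2.
Proof.
by rewrite inE => /existsP [u /existsP [v /andP [_ /eqP ->]]]; rewrite cards2 ltnS leq_b1.
Qed.

Section Symmetric.
Hypothesis esym : symmetric e.

Lemma within_sym n x y : within n x y -> within n y x.
Proof.
elim: n x y => [|n IH] x y /=; first by rewrite eq_sym.
case/orP => [xy | /existsP [z /andP [xz zy]]]; first exact/withinS/IH.
by apply: within_rcons (IH _ _ zy) _; rewrite esym.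
Qed.

(* When r and s are not adjacent, [q] is the first and [y] the last inner
   vertex of a shortest r-s path: dist(q, s) and dist(q, y) are both below
   dist(r, s). *)
Lemma nonadjacent_path_ends r s : r != s -> ~~ e r s -> connect e r s ->
  exists q y, [/\ e r q, e s y, closer_to r y s &
    forall f, is_aut e f -> f r = q -> f s \notin [set s; y]].
Proof.
move=> neq_rs nrs /exists_closer_neighbor /(_ neq_rs) [q rq [[|m] [qs nrs_m]]].
  by move: qs nrs => /eqP <-; rewrite rq.
have [y sy yq] : exists2 y, e s y & within m y q.
  move: (within_sym qs) => /orP [sq | /existsP [y /andP [sy yq]]].
    by rewrite (within_cons rq (within_sym sq)) in nrs_m.
  by exists y.
exists q, y; split=> //.
  exists m.+1; split; first by apply: within_rcons yq _; rewrite esym.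
  by apply: contra nrs_m; exact: within_sym.
move=> f autf frq; rewrite !inE; apply/negP => /orP [] /eqP fs;
  move: nrs_m; rewrite -(within_aut m.+1 r s autf) frq fs ?qs //.
by rewrite withinS // within_sym.
Qed.

End Symmetric.

Lemma vdet_setT : vdet_set e [set: T].
Proof.
apply/forallP => f; apply/implyP => /andP [_ /forall_inP fixT].
by apply/eqP/permP => x; rewrite perm1; apply/eqP/fixT; rewrite inE.
Qed.

Lemma edet_set0 : vdet_set e set0 -> edet_set e set0.
Proof.
move=> vdet0; rewrite /edet_set sub0set; apply/forallP => f.
apply/implyP => /andP [autf _]; have /implyP := forallP vdet0 f; apply.
by rewrite autf; apply/forall_inP => x; rewrite inE.
Qed.

Lemma vdet_cover (X : {set {set T}}) : edet_set e X -> vdet_set e (cover X).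
Proof.
case/andP => _ /forallP edetX; apply/forallP => f.
apply/implyP => /andP [autf /forall_inP fixX]; have /implyP := edetX f; apply.
rewrite autf; apply/forall_inP => A XA; rewrite -[X in _ == X]imset_id.
by apply/eqP/eq_in_imset => x Ax; apply/eqP/fixX/bigcupP; exists A.
Qed.

Lemma cover_edge_set : connected_graph e -> 1 < #|T| ->
  cover (edge_set e) = [set: T].
Proof.
move=> conn gt1T; apply/setP => x; rewrite inE; apply/bigcupP.
have [y xy] : exists y, y \notin [set x] by apply: exists_notin; rewrite cards1.
have [a [b [ax _ ab]]] := connect_cut_edge (set11 x) xy (conn x y).
exists [set a; b]; first exact: edge_set_pair.
by move: ax; rewrite inE => /eqP ->; exact: set21.
Qed.

Lemma card_cover_edges (X : {set {set T}}) : X \subset edge_set e ->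
  #|cover X| <= 2 * #|X|.
Proof.
move=> Xe; apply: leq_trans (leq_card_cover X).1 _.
by rewrite mulnC -sum_nat_const; apply: leq_sum => A /(subsetP Xe) /edge_set_card_le2.
Qed.

Lemma edet_pairsU (S : {set T}) r (p : T -> T) (Y : {set {set T}}) :
  vdet_set e S -> r \in S ->
  {in S, forall v, e v (p v)} ->
  {in S, forall v, v != r -> closer_to r (p v) v} ->
  Y \subset edge_set e ->
  (forall f, is_aut e f -> {in S, forall v, f v \in [set v; p v]} ->
     (forall A, A \in Y -> f @: A = A) -> f r = r) ->
  edet_set e ([set [set v; p v] | v in S] :|: Y).
Proof.
move=> vdetS Sr Sp Sclose Ye fix_r; apply/andP; split.
  apply/subsetP => A /setUP [/imsetP [v Sv ->] | /(subsetP Ye) //].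
  exact/edge_set_pair/Sp.
apply/forallP => f; apply/implyP => /andP [autf /forall_inP fixX].
have fixS : {in S, forall v, f v \in [set v; p v]}.
  move=> v Sv; apply: mem_fixed_imset (set21 _ _); apply/eqP/fixX.
  by rewrite in_setU; apply/orP; left; apply/imsetP; exists v.
have fr : f r = r.
  by apply: fix_r autf fixS _ => A YA; apply/eqP/fixX; rewrite in_setU YA orbT.
have /implyP := forallP vdetS f; apply; rewrite autf /=.
apply/forall_inP => v Sv; have [-> | neq_vr] := eqVneq v r; first by rewrite fr.
move: (fixS v Sv); rewrite !inE => /orP [// | /eqP fv]; exfalso.
by apply: (aut_not_closer (x := v) autf fr); rewrite fv; exact: Sclose.
Qed.

Lemma det_number_le (S : {set T}) : vdet_set e S -> det_number e <= #|S|.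
Proof. exact: geq_bigminn. Qed.

Lemma det_index_le (X : {set {set T}}) : edet_set e X -> det_index e <= #|X|.
Proof. exact: geq_bigminn. Qed.

End Graph.

Section EdgeDeterminingFromVertex.
Variables (T : finType) (e : rel T).
Hypotheses (esym : symmetric e) (conn : connected_graph e).
Variables (S : {set T}) (r s : T) (g : T -> T).
Hypotheses (vdetS : vdet_set e S) (Sr : r \in S) (Ss : s \in S) (neq_rs : r != s).
Hypothesis g_closer : forall v, v != r -> e v (g v) /\ closer_to e r (g v) v.

Lemma exists_edet_adjacent : 3 <= #|T| -> e r s ->
  exists2 X, edet_set e X & #|X| <= #|S|.
Proof.
move=> ge3T rs.
have [y ry] : exists y, y \notin [set r; s].
  by apply: exists_notin; rewrite cards2 neq_rs.
have [a [b [rsa rsb ab]]] := connect_cut_edge (set21 r s) ry (conn r y).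
pose p v := if v == r then s else if v == s then r else g v.
have [pr ps] : p r = s /\ p s = r by rewrite /p eqxx eq_sym (negbTE neq_rs) eqxx.
exists ([set [set v; p v] | v in S] :|: [set [set a; b]]).
  apply: edet_pairsU vdetS Sr _ _ _ _.
  - move=> v _; rewrite /p; case: (eqVneq v r) => [-> // | vr].
    by case: (eqVneq v s) => [->|_]; [rewrite esym | case: (g_closer vr)].
  - move=> v _ vr; rewrite /p (negbTE vr); case: (eqVneq v s) => [-> | _].
      by exists 0; rewrite /= eqxx eq_sym.
    by case: (g_closer vr).
  - by rewrite sub1set edge_set_pair.
  move=> f autf fixS fixY.
  have frs v : v \in [set r; s] -> f v \in [set r; s].
    by case/set2P => ->; [rewrite -pr | rewrite setUC -ps]; apply: fixS.
  have fa : f a = a.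
    have := mem_fixed_imset (fixY _ (set11 _)) (set21 a b).
    rewrite !inE => /orP [/eqP // | /eqP fab].
    by move: (frs a rsa); rewrite fab (negbTE rsb).
  move: (rsa) (frs r (set21 r s)); rewrite !inE => /orP [/eqP <- // | /eqP sa].
  case/orP => /eqP // frs_eq; move: neq_rs.
  by rewrite -(inj_eq (@perm_inj _ f)) frs_eq -sa fa eqxx.
have -> : [set [set v; p v] | v in S] = [set [set v; p v] | v in S :\ s].
  rewrite -{1}(setD1K Ss) imsetU1; apply/setUidPr; rewrite sub1set ps.
  by apply/imsetP; exists r; [rewrite !inE neq_rs | rewrite pr setUC].
rewrite cardsU cards1; apply: leq_trans (leq_subr _ _) _.
by rewrite addn1 (cardsD1 s S) Ss add1n ltnS leq_imset_card.
Qed.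

Lemma exists_edet_nonadjacent : ~~ e r s ->
  exists2 X, edet_set e X & #|X| <= #|S|.
Proof.
move=> nrs.
have [q [y [rq sy ys fs_out]]] := nonadjacent_path_ends esym neq_rs nrs (conn r s).
pose p v := if v == r then q else if v == s then y else g v.
have [pr ps] : p r = q /\ p s = y by rewrite /p eqxx eq_sym (negbTE neq_rs) eqxx.
exists ([set [set v; p v] | v in S] :|: set0); last by rewrite setU0 leq_imset_card.
apply: edet_pairsU vdetS Sr _ _ (sub0set _) _.
- move=> v _; rewrite /p; case: (eqVneq v r) => [-> // | vr].
  by case: (eqVneq v s) => [-> // | _]; case: (g_closer vr).
- move=> v _ vr; rewrite /p (negbTE vr); case: (eqVneq v s) => [-> // | _].
  by case: (g_closer vr).
move=> f autf fixS _; move: (fixS r Sr); rewrite pr => /set2P [// | frq].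
by move: (fixS s Ss); rewrite ps (negbTE (fs_out f autf frq)).
Qed.

End EdgeDeterminingFromVertex.

Lemma exists_edet_le_vdet (T : finType) (e : rel T) (S : {set T}) :
  symmetric e -> connected_graph e -> 3 <= #|T| ->
  vdet_set e S -> #|S| != 1 -> exists2 X, edet_set e X & #|X| <= #|S|.
Proof.
move=> esym conn ge3T vdetS; case: (ltngtP #|S| 1) => [|gt1S _|//].
  rewrite ltnS leqn0 => /eqP /cards0_eq S0 _; exists set0; last by rewrite cards0.
  by apply: edet_set0; rewrite -S0.
have [r [s [Sr Ss neq_rs]]] := card_gt1P gt1S.
have [g g_closer] : exists g : T -> T, forall v, v != r ->
    e v (g v) /\ closer_to e r (g v) v.
  apply: (@fin_all_exists _ (fun=> T)
    (fun v z => v != r -> e v z /\ closer_to e r z v)).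
  move=> v; have [-> | vr] := eqVneq v r; first by exists r.
  by have [z] := exists_closer_neighbor (conn v r) vr; exists z.
have [rs | nrs] := boolP (e r s).
  exact (exists_edet_adjacent esym conn vdetS Sr Ss neq_rs g_closer ge3T rs).
exact (exists_edet_nonadjacent esym conn vdetS Sr Ss neq_rs g_closer nrs).
Qed.

Lemma det_number_le_double_det_index (T : finType) (e : rel T) :
  connected_graph e -> 1 < #|T| -> det_number e <= 2 * det_index e.
Proof.
move=> conn gt1T.
have le_edges (X : {set {set T}}) :
    X \subset edge_set e -> vdet_set e (cover X) -> det_number e <= 2 * #|X|.
  by move=> Xe vdetX; apply: leq_trans (det_number_le vdetX) (card_cover_edges Xe).
apply: (big_ind (fun k => det_number e <= 2 * k)).
- by apply: le_edges; rewrite ?cover_edge_set ?vdet_setT.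
- by move=> x y lex ley; rewrite minnMr leq_min lex ley.
- by move=> X edetX; apply: le_edges (vdet_cover edetX); case/andP: edetX.
Qed.

Lemma det_index_le_det_number (T : finType) (e : rel T) :
  symmetric e -> connected_graph e -> 3 <= #|T| ->
  det_number e != 1 -> det_index e <= det_number e.
Proof.
move=> esym conn ge3T.
rewrite /det_number; have [S vdetS ->] :=
  bigminn_attained (F := fun S : {set T} => #|S|) (vdet_setT e) (max_card _).
move=> S_neq1; have [X edetX XS] := exists_edet_le_vdet esym conn ge3T vdetS S_neq1.
exact: leq_trans (det_index_le edetX) XS.
Qed.

Theorem corollary1 (T : finType) (e : rel T) :
  simple_graph e -> connected_graph e -> 3 <= #|T| ->
  det_number e <> 1 ->
  det_number e <= 2 * det_index e /\ det_index e <= det_number e.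
Proof.
move=> [esym _] conn ge3T /eqP det_neq1; split.
  exact: det_number_le_double_det_index (ltnW ge3T).
exact: det_index_le_det_number.
Qed.
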